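(* Let $G$ be a finite simple graph with at least one edge and $\beta\in\mathbb{R}$. Then $M(t)=(d(t)+d(t)^* )^2\to0$ as $|t|\to\infty$, but $M(t)\neq0$ for every finite $t\in\mathbb{R}$.
   Context: For $k\ge0$ let $\Omega_k$ be the space of complex-valued functions on the (oriented) $k$-simplices of $G$ (complete subgraphs with $k+1$ vertices), $\Omega=\bigoplus_k\Omega_k$. The exterior derivative $d_0:\Omega_k\to\Omega_{k+1}$ is $(d_0f)(x_0,\dots,x_{k+1})=\sum_{j}(-1)^jf(x_0,\dots,\hat x_j,\dots,x_{k+1})$, $D_0=d_0+d_0^*$. For a self-adjoint operator $D$ on $\Omega$ whose blocks $\Omega_k\to\Omega_j$ vanish unless $|j-k|\le1$, write $D=d+d^*+b$ with $d$ the blocks $\Omega_k\to\Omega_{k+1}$ and $b$ the block-diagonal part. The Dirac deformation with real parameter $\beta$ is the solution $D(t)$ of $D'=BD-DB$, $D(0)=D_0$, with $B(t)=d(t)-d(t)^*+i\beta b(t)$, $D(t)=d(t)+d(t)^*+b(t)$ (the solution exists for all real $t$ and keeps this form). *)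

From mathcomp Require Import all_boot all_order all_algebra.
From mathcomp Require Import all_classical all_reals all_analysis.
From mathcomp.real_closed Require Import complex.
Import Order.TTheory GRing.Theory Num.Theory numFieldNormedType.Exports.

Set Implicit Arguments. Unset Strict Implicit. Unset Printing Implicit Defensive.
Local Open Scope ring_scope.

(* A finite simple graph on the vertex set 'I_n (the natural order of 'I_n
   fixes the orientation of every simplex: (x_0,...,x_k) with x_0 < ... < x_k). *)
Definition simple_graph (n : nat) (e : rel 'I_n) : Prop :=
  (forall x y, e x y = e y x) /\ (forall x, ~~ e x x).

Definition has_edge (n : nat) (e : rel 'I_n) : Prop := exists x y, e x y.

Definition is_simplex (n : nat) (e : rel 'I_n) (A : {set 'I_n}) : bool :=
  (0 < #|A|)%N && [forall x in A, forall y in A, (x != y) ==> e x y].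

Definition simplex (n : nat) (e : rel 'I_n) := {A : {set 'I_n} | is_simplex e A}.

(* Omega = functions on all simplices; basis indexed by 'I_(nsimp e) *)
Definition nsimp (n : nat) (e : rel 'I_n) : nat := #|{: simplex e}|.

Definition simp (n : nat) (e : rel 'I_n) (i : 'I_(nsimp e)) : {set 'I_n} :=
  val (enum_val i).

(* degree k of the basis element i, i.e. i lies in Omega_k *)
Definition sdim (n : nat) (e : rel 'I_n) (i : 'I_(nsimp e)) : nat :=
  (#|simp i|).-1.

Section Dirac.
Variables (R : realType) (n : nat) (e : rel 'I_n).
Local Notation N := (nsimp e).
Local Notation C := (R[i]).

(* exterior derivative d_0 : entry (i,j) = coefficient of f(simplex j) in (d_0 f)(simplex i) *)
Definition d0 : 'M[C]_N :=
  \matrix_(i < N, j < N)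
    if (simp j \subset simp i) && (#|simp i| == (#|simp j|).+1) then
      \sum_(v in simp i :\: simp j) (-1) ^+ #|[set x in simp i | (x < v)%N]|
    else 0.

Definition adjmx (M : 'M[C]_N) : 'M[C]_N := (map_mx (fun z : C => z^*) M)^T.

Definition D0 : 'M[C]_N := d0 + adjmx d0.

Definition dpart (D : 'M[C]_N) : 'M[C]_N :=
  \matrix_(i < N, j < N) if sdim i == (sdim j).+1 then D i j else 0.

Definition bpart (D : 'M[C]_N) : 'M[C]_N :=
  \matrix_(i < N, j < N) if sdim i == sdim j then D i j else 0.

Definition Bop (beta : R) (D : 'M[C]_N) : 'M[C]_N :=
  dpart D - adjmx (dpart D) + (Complex 0 beta) *: bpart D.

Definition Mop (D : 'M[C]_N) : 'M[C]_N :=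
  (dpart D + adjmx (dpart D)) *m (dpart D + adjmx (dpart D)).

Definition has_mx_derive (D : R -> 'M[C]_N) (t : R) (D' : 'M[C]_N) : Prop :=
  forall i j,
    is_derive t 1 (fun s => complex.Re (D s i j)) (complex.Re (D' i j)) /\
    is_derive t 1 (fun s => complex.Im (D s i j)) (complex.Im (D' i j)).

Definition dirac_deformation (beta : R) (D : R -> 'M[C]_N) : Prop :=
  D 0 = D0 /\
  forall t, has_mx_derive D t (Bop beta (D t) *m D t - D t *m Bop beta (D t)).

End Dirac.

From mathcomp Require Import all_boot all_order all_algebra.
From mathcomp Require Import all_classical all_reals all_analysis.
From mathcomp.real_closed Require Import complex.
From mathcomp Require Import ring lra zify.
Import Order.TTheory GRing.Theory Num.Theory numFieldNormedType.Exports.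

Set Implicit Arguments.
Unset Strict Implicit.
Unset Printing Implicit Defensive.

Local Open Scope ring_scope.
Local Open Scope classical_set_scope.

(* Along the flow D' = B D - D B, hermiticity, the band structure of D_0 and
   the vanishing of d are each the zero set of a quantity q(t) >= 0 (a squared
   Frobenius norm) with |q'| <= K q on compact intervals, so Gronwall's inequality
   propagates them from any time to any other; moreover the Frobenius norm of D is
   conserved, which bounds the entries of D(t) uniformly in t.  Hence D(t) stays
   hermitian and banded, and the degree-weighted trace Re sum_i deg(i) D(t)_ii is
   bounded with derivative 2 |d(t)|^2, whose own derivative is bounded: by
   Barbalat's lemma |d(t)|^2 -> 0 as t -> +-oo, and M = (d + d^* )^2 is bounded
   by a multiple of |d|^2.  Finally M(t) = 0 forces d(t) = 0, which would
   propagate back to d_0 = 0, impossible once G has an edge. *)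

Section RealAnalysis.
Variable R : realType.
Implicit Types (f df g dg : R -> R) (a b c t x K : R).

Lemma is_derive_mulrl c x : is_derive x 1 (fun t => c * t) c.
Proof.
have := @is_deriveZ R R R id c x 1 1 (is_derive_id x 1).
by rewrite /GRing.scale /= mulr1.
Qed.

Lemma is_derive_expRM K x : is_derive x 1 (fun t => expR (K * t)) (K * expR (K * x)).
Proof.
rewrite mulrC; exact: (is_derive1_comp (is_derive_expR (K * x)) (is_derive_mulrl K x)).
Qed.

Lemma ler_derive_ge0 f df a b : a <= b ->
  (forall x, is_derive x 1 f (df x)) ->
  (forall x, a <= x -> x <= b -> 0 <= df x) -> f a <= f b.
Proof.
move=> ab fd df_ge0.
have cf : {within `[a, b], continuous f}.
  by apply: derivable_within_continuous => x _; have [] := fd x.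
have [c cab fab] := MVT_segment ab (fun x _ => fd x) cf.
rewrite -subr_ge0 fab mulr_ge0 ?subr_ge0 //.
by move: cab; rewrite in_itv /= => /andP[? ?]; apply: df_ge0.
Qed.

Lemma gronwall_eq0 f df a b K : a <= b ->
  (forall x, is_derive x 1 f (df x)) ->
  (forall x, a <= x -> x <= b -> `|df x| <= K * f x) ->
  (f a = 0 <-> f b = 0).
Proof.
move=> ab fd bnd.
(* f e^{-Kx} is nonincreasing and f e^{Kx} nondecreasing on [a, b] *)
have decr : f b * expR (- K * b) <= f a * expR (- K * a).
  rewrite -lerN2.
  apply: (@ler_derive_ge0 (fun x => - (f x * expR (- K * x)))
     (fun x => - (f x * (- K * expR (- K * x)) + expR (- K * x) * df x))) => //.
    by move=> x; apply: is_deriveN; have := is_deriveM (fd x) (is_derive_expRM (- K) x).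
  move=> x ax xb; have := bnd x ax xb; rewrite ler_norml => /andP[_ dfK].
  have ex0 := expR_gt0 (- K * x).
  have -> : - (f x * (- K * expR (- K * x)) + expR (- K * x) * df x) =
    expR (- K * x) * (K * f x - df x) by ring.
  by apply: mulr_ge0; [exact: ltW | lra].
have incr : f a * expR (K * a) <= f b * expR (K * b).
  apply: (@ler_derive_ge0 (fun x => f x * expR (K * x))
     (fun x => f x * (K * expR (K * x)) + expR (K * x) * df x)) => //.
    by move=> x; have := is_deriveM (fd x) (is_derive_expRM K x).
  move=> x ax xb; have := bnd x ax xb; rewrite ler_norml => /andP[dfK _].
  have ex0 := expR_gt0 (K * x).
  have -> : f x * (K * expR (K * x)) + expR (K * x) * df x =
    expR (K * x) * (K * f x + df x) by ring.
  by apply: mulr_ge0; [exact: ltW | lra].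
have [ea eb] := (expR_gt0 (K * a), expR_gt0 (K * b)).
have [ea' eb'] := (expR_gt0 (- K * a), expR_gt0 (- K * b)).
split=> f0; move: decr incr; rewrite f0 !mul0r => decr incr.
  apply/eqP; rewrite eq_le -(pmulr_rle0 _ eb') -(pmulr_rge0 _ eb).
  by rewrite mulrC decr mulrC incr.
apply/eqP; rewrite eq_le -(pmulr_rle0 _ ea) -(pmulr_rge0 _ ea').
by rewrite mulrC incr mulrC decr.
Qed.

Lemma derive_eq0_propagates f df :
  (forall x, is_derive x 1 f (df x)) ->
  (forall a b, a <= b -> exists K, forall x, a <= x -> x <= b -> `|df x| <= K * f x) ->
  forall s t, f s = 0 -> f t = 0.
Proof.
move=> fd bnd s t fs0; have [st|/ltW ts] := leP s t.
  by have [K hK] := bnd s t st; apply: (gronwall_eq0 st fd hK).1.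
by have [K hK] := bnd t s ts; apply: (gronwall_eq0 ts fd hK).2.
Qed.

Lemma derivable_bounded_on f df a b : a <= b ->
  (forall x, is_derive x 1 f (df x)) ->
  exists2 m, 0 <= m & forall x, a <= x -> x <= b -> `|f x| <= m.
Proof.
move=> ab fd.
have cont g dg : (forall x, is_derive x 1 g (dg x)) -> {within `[a, b], continuous g}.
  by move=> gd; apply: derivable_within_continuous => x _; have [] := gd x.
have [x1 _ max_f] := EVT_max ab (cont _ _ fd).
have [x2 _ min_f] := EVT_max ab (cont _ _ (fun x => is_deriveN (fd x))).
exists (`|f x1| + `|f x2|) => [|x ax xb]; first by rewrite addr_ge0.
have xab : x \in `[a, b]%R by rewrite in_itv /= ax xb.
have ub : f x <= `|f x1| := le_trans (max_f x xab) (ler_norm _).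
have lb : - f x <= `|f x2| by rewrite -normrN; apply: le_trans (min_f x xab) (ler_norm _).
have := normr_ge0 (f x1); have := normr_ge0 (f x2).
by rewrite ler_norml => *; apply/andP; split; lra.
Qed.

Lemma ler_derive_lipschitz g dg K s t :
  (forall x, is_derive x 1 g (dg x)) -> (forall x, `|dg x| <= K) ->
  s <= t -> g s - K * (t - s) <= g t.
Proof.
move=> gd dgK st.
have : g s + K * s <= g t + K * t.
  apply: (ler_derive_ge0 st (fun x => is_deriveD (gd x) (is_derive_mulrl K x))).
  by move=> x _ _; have := dgK x; rewrite ler_norml => /andP[? _]; lra.
lra.
Qed.

Lemma ler_derive_increment f g c a b : a <= b ->
  (forall x, is_derive x 1 f (g x)) ->
  (forall x, a <= x -> x <= b -> c <= g x) -> c * (b - a) <= f b - f a.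
Proof.
move=> ab fd cg.
have : f a - c * a <= f b - c * b.
  apply: (ler_derive_ge0 ab (fun x => is_deriveB (fd x) (is_derive_mulrl c x))).
  by move=> x ax xb; rewrite subr_ge0 cg.
lra.
Qed.

(* Barbalat: f is increasing and bounded while its derivative g is Lipschitz,
   so g cannot stay away from 0. *)
Lemma barbalat_pinfty f g dg (F K : R) :
  (forall x, is_derive x 1 f (g x)) -> (forall x, is_derive x 1 g (dg x)) ->
  (forall x, 0 <= g x) -> (forall x, `|f x| <= F) -> (forall x, `|dg x| <= K) ->
  g t @[t --> +oo] --> (0 : R).
Proof.
move=> fd gd g_ge0 fF dgK; apply/cvgrPdist_lt => eps eps0.
have K0 : 0 <= K by apply: le_trans (dgK 0); exact: normr_ge0.
have K1 : 0 < K + 1 by lra.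
pose del := eps / (4 * (K + 1)).
have del0 : 0 < del by rewrite divr_gt0 //; lra.
have Kdel : (K + 1) * del = eps / 4 by rewrite /del; field; lra.
have fsup : has_sup (range f).
  split; first by exists (f 0), 0.
  by exists F => _ [x _ <-]; have := fF x; rewrite ler_norml => /andP[].
have [_ [t0 _ <-] ft0] := sup_adherent (divr_gt0 (mulr_gt0 eps0 del0) (ltr0Sn _ 1)) fsup.
exists t0; split; first exact: num_real.
move=> t t0t; rewrite sub0r normrN ger0_norm //.
have ft : f t0 <= f t by apply: (ler_derive_ge0 (ltW t0t) fd) => x _ _.
have fdel : f (t + del) <= sup (range f) by apply: sup_upper_bound => //; exists (t + del).
have gt : forall x, t <= x -> x <= t + del -> g t - (K + 1) * del <= g x.
  have dgK1 y : `|dg y| <= K + 1 by apply: le_trans (dgK y) _; lra.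
  move=> x tx xtd; have := ler_derive_lipschitz gd dgK1 tx.
  have : (K + 1) * (x - t) <= (K + 1) * del by rewrite ler_pM2l //; lra.
  lra.
have tdel : t <= t + del by lra.
have := ler_derive_increment tdel fd gt; rewrite addrAC subrr add0r Kdel => incr.
have : (g t - eps / 4) * del < eps / 2 * del.
  by rewrite mulrAC; apply: le_lt_trans incr _; lra.
rewrite ltr_pM2r // => ?.
lra.
Qed.

Lemma barbalat_ninfty f g dg (F K : R) :
  (forall x, is_derive x 1 f (g x)) -> (forall x, is_derive x 1 g (dg x)) ->
  (forall x, 0 <= g x) -> (forall x, `|f x| <= F) -> (forall x, `|dg x| <= K) ->
  g t @[t --> -oo] --> (0 : R).
Proof.
move=> fd gd g_ge0 fF dgK; apply/cvgNy_compNP.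
apply: (@barbalat_pinfty (fun t => - f (- t)) _ (fun t => - dg (- t)) F K).
- move=> x; apply: (is_derive_eq (is_deriveN (is_derive1_comp (fd (- x)) (is_deriveNid x 1)))).
  by rewrite mulrN1 opprK.
- move=> x; apply: (is_derive_eq (is_derive1_comp (gd (- x)) (is_deriveNid x 1))).
  by rewrite mulrN1.
- by move=> x; apply: g_ge0.
- by move=> x; rewrite normrN.
- by move=> x; rewrite normrN.
Qed.

Lemma cvg0_dominated {T} (F : set_system T) {FF : Filter F} (h g : T -> R) (c : R) :
  (forall u, `|h u| <= c * g u) -> g @ F --> 0 -> h @ F --> 0.
Proof.
move=> hg /cvgrPdist_lt g0; apply/cvgrPdist_lt => eps eps0.
have c1 : 0 < `|c| + 1 by rewrite ltr_wpDl.
apply: filterS (g0 _ (divr_gt0 eps0 c1)) => u; rewrite !sub0r !normrN => gu.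
have {}gu : (`|c| + 1) * `|g u| < eps by rewrite mulrC -ltr_pdivlMr.
apply: le_lt_trans (hg u) _; apply: le_lt_trans (ler_norm _) _.
by rewrite normrM; have := normr_ge0 (g u); nra.
Qed.

End RealAnalysis.

Section Conjugation.
Variable C : numClosedFieldType.
Implicit Types z w : C.

Lemma conjCD z w : (z + w)^* = z^* + w^*. Proof. exact: rmorphD. Qed.
Lemma conjCN z : (- z)^* = - z^*. Proof. exact: rmorphN. Qed.
Lemma conjCB z w : (z - w)^* = z^* - w^*. Proof. exact: rmorphB. Qed.
Lemma conjCM z w : (z * w)^* = z^* * w^*. Proof. exact: rmorphM. Qed.
Lemma conjC_sum (I : Type) (r : seq I) (P : pred I) (F : I -> C) :
  (\sum_(i <- r | P i) F i)^* = \sum_(i <- r | P i) (F i)^*.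
Proof. exact: rmorph_sum. Qed.

End Conjugation.

Section ComplexNorms.
Variable R : realType.
Local Notation C := R[i].
Local Notation Re := (@complex.Re R).
Local Notation Im := (@complex.Im R).
Implicit Types z w : C.

Lemma ReM z w : Re (z * w) = Re z * Re w - Im z * Im w.
Proof. by case: z => a b; case: w. Qed.

Lemma ImM z w : Im (z * w) = Re z * Im w + Im z * Re w.
Proof. by case: z => a b; case: w. Qed.

Lemma ReJ z : Re z^* = Re z. Proof. by case: z. Qed.

Lemma ImJ z : Im z^* = - Im z. Proof. by case: z. Qed.

(* The l1 norm is equivalent to the modulus and avoids square roots. *)
Definition l1normc z := `|Re z| + `|Im z|.

Definition sqnormc z := Re z ^+ 2 + Im z ^+ 2.

Lemma l1normc_ge0 z : 0 <= l1normc z. Proof. by rewrite addr_ge0. Qed.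

Lemma l1normc0 : l1normc 0 = 0. Proof. by rewrite /l1normc !raddf0 normr0 addr0. Qed.

Lemma l1normcN z : l1normc (- z) = l1normc z.
Proof. by rewrite /l1normc !raddfN !normrN. Qed.

Lemma l1normcJ z : l1normc z^* = l1normc z.
Proof. by rewrite /l1normc ReJ ImJ normrN. Qed.

Lemma l1normcD z w : l1normc (z + w) <= l1normc z + l1normc w.
Proof.
rewrite /l1normc !raddfD.
have := ler_normD (Re z) (Re w); have := ler_normD (Im z) (Im w); lra.
Qed.

Lemma l1normcB z w : l1normc (z - w) <= l1normc z + l1normc w.
Proof. by rewrite -(l1normcN w); apply: l1normcD. Qed.

Lemma l1normcM z w : l1normc (z * w) <= l1normc z * l1normc w.
Proof.
rewrite /l1normc ReM ImM.
have := ler_normB (Re z * Re w) (Im z * Im w).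
have := ler_normD (Re z * Im w) (Im z * Re w).
rewrite !normrM; nra.
Qed.

Lemma l1normcM_le z w a b :
  l1normc z <= a -> l1normc w <= b -> l1normc (z * w) <= a * b.
Proof. by move=> za wb; apply: le_trans (l1normcM _ _) (ler_pM _ _ za wb); exact: l1normc_ge0. Qed.

Lemma l1normc_sum (I : Type) (r : seq I) (P : pred I) (F : I -> C) :
  l1normc (\sum_(i <- r | P i) F i) <= \sum_(i <- r | P i) l1normc (F i).
Proof.
elim/big_rec2: _ => [|i y1 y2 _ IH]; first by rewrite l1normc0.
by apply: le_trans (l1normcD _ _) _; rewrite lerD2l.
Qed.

Lemma l1normc_if (b : bool) z : l1normc (if b then z else 0) <= l1normc z.
Proof. by case: b; rewrite ?l1normc0 ?l1normc_ge0. Qed.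

Lemma Re_le_l1normc z : `|Re z| <= l1normc z.
Proof. by rewrite lerDl normr_ge0. Qed.

Lemma Im_le_l1normc z : `|Im z| <= l1normc z.
Proof. by rewrite lerDr normr_ge0. Qed.

Lemma l1normc_iM (b : R) z : l1normc (Complex 0 b * z) = `|b| * l1normc z.
Proof. by rewrite /l1normc ReM ImM /= !mul0r sub0r add0r normrN !normrM mulrDr addrC. Qed.

Lemma l1normc_natr k : l1normc k%:R = k%:R.
Proof.
by rewrite -(rmorph_nat (real_complex R)) /l1normc /= normr0 addr0 ger0_norm.
Qed.

Lemma sqnormc_ge0 z : 0 <= sqnormc z. Proof. by rewrite addr_ge0 ?sqr_ge0. Qed.

Lemma sqnormc_if (b : bool) z : sqnormc (if b then z else 0) <= sqnormc z.
Proof. by case: b; rewrite /sqnormc ?raddf0 ?expr0n //= addr0 sqnormc_ge0. Qed.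

Lemma sqnormc_eq0 z : sqnormc z = 0 -> z = 0.
Proof.
move=> z0; have := sqr_ge0 (Re z); have := sqr_ge0 (Im z).
have {z0} : Re z ^+ 2 + Im z ^+ 2 = 0 := z0.
move: z => [a b] /= ab0 b0 a0.
have /eqP : a ^+ 2 = 0 by lra.
have /eqP : b ^+ 2 = 0 by lra.
by rewrite !sqrf_eq0 => /eqP -> /eqP ->.
Qed.

Lemma Re_mulJ z : Re (z^* * z) = sqnormc z.
Proof. by rewrite ReM ReJ ImJ /sqnormc; ring. Qed.

Lemma l1normc_sqr_le z : l1normc z ^+ 2 <= 2 * sqnormc z.
Proof.
rewrite /l1normc /sqnormc -(real_normK (num_real (Re z))) -(real_normK (num_real (Im z))).
have := sqr_ge0 (`|Re z| - `|Im z|); nra.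
Qed.

Lemma l1normc_le_sqnormc z : l1normc z <= 1 + 2 * sqnormc z.
Proof. have := l1normc_sqr_le z; have := l1normc_ge0 z; nra. Qed.

Lemma Re_mulJ_le z w : `|Re (z^* * w)| <= l1normc z * l1normc w.
Proof. by rewrite -(l1normcJ z); apply: le_trans (Re_le_l1normc _) (l1normcM _ _). Qed.

End ComplexNorms.

Section ComplexCalculus.
Variable R : realType.
Local Notation C := R[i].
Local Notation Re := (@complex.Re R).
Local Notation Im := (@complex.Im R).
Implicit Types (z w : R -> C) (t : R).

Definition is_derivec z t (z' : C) :=
  is_derive t 1 (fun s => Re (z s)) (Re z') /\ is_derive t 1 (fun s => Im (z s)) (Im z').

Lemma is_derivec_cst (c : C) t : is_derivec (fun _ => c) t 0.
Proof. by split; rewrite raddf0; apply: is_derive_cst. Qed.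

Lemma is_derivecD z w t (z' w' : C) : is_derivec z t z' -> is_derivec w t w' ->
  is_derivec (fun s => z s + w s) t (z' + w').
Proof.
move=> [zr zi] [wr wi]; split.
  by under eq_fun do rewrite raddfD; rewrite raddfD; apply: is_deriveD.
by under eq_fun do rewrite raddfD; rewrite raddfD; apply: is_deriveD.
Qed.

Lemma is_derivecN z t (z' : C) : is_derivec z t z' -> is_derivec (fun s => - z s) t (- z').
Proof.
move=> [zr zi]; split.
  by under eq_fun do rewrite raddfN; rewrite raddfN; apply: is_deriveN.
by under eq_fun do rewrite raddfN; rewrite raddfN; apply: is_deriveN.
Qed.

Lemma is_derivecM z w t (z' w' : C) : is_derivec z t z' -> is_derivec w t w' ->
  is_derivec (fun s => z s * w s) t (z' * w t + z t * w').
Proof.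
move=> [zr zi] [wr wi]; split.
  have -> : (fun s => Re (z s * w s)) = (fun s => Re (z s)) * (fun s => Re (w s)) -
      (fun s => Im (z s)) * (fun s => Im (w s)) by apply/funext => s; rewrite ReM.
  have -> : Re (z' * w t + z t * w') = Re (z t) * Re w' + Re (w t) * Re z' -
    (Im (z t) * Im w' + Im (w t) * Im z') by rewrite raddfD /= !ReM; ring.
  exact: is_deriveB (is_deriveM zr wr) (is_deriveM zi wi).
have -> : (fun s => Im (z s * w s)) = (fun s => Re (z s)) * (fun s => Im (w s)) +
    (fun s => Im (z s)) * (fun s => Re (w s)) by apply/funext => s; rewrite ImM.
have -> : Im (z' * w t + z t * w') = Re (z t) * Im w' + Im (w t) * Re z' +
  (Im (z t) * Re w' + Re (w t) * Im z') by rewrite raddfD /= !ImM; ring.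
exact: is_deriveD (is_deriveM zr wi) (is_deriveM zi wr).
Qed.

Lemma is_derivecMl (c : C) z t (z' : C) :
  is_derivec z t z' -> is_derivec (fun s => c * z s) t (c * z').
Proof.
by move=> zd; have := is_derivecM (is_derivec_cst c t) zd; rewrite mul0r add0r.
Qed.

Lemma is_derivecJ z t (z' : C) : is_derivec z t z' -> is_derivec (fun s => (z s)^*) t z'^*.
Proof.
move=> [zr zi]; split; first by under eq_fun do rewrite ReJ; rewrite ReJ.
by under eq_fun do rewrite ImJ; rewrite ImJ; apply: is_deriveN.
Qed.

Lemma is_derivec_sum m (z : 'I_m -> R -> C) t (z' : 'I_m -> C) :
  (forall k, is_derivec (z k) t (z' k)) ->
  is_derivec (fun s => \sum_k z k s) t (\sum_k z' k).
Proof.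
move=> zd; split.
  have -> : (fun s => Re (\sum_k z k s)) = \sum_k (fun s => Re (z k s)).
    by apply/funext => s; rewrite raddf_sum fct_sumE.
  by rewrite raddf_sum; apply: is_derive_sum => k; case: (zd k).
have -> : (fun s => Im (\sum_k z k s)) = \sum_k (fun s => Im (z k s)).
  by apply/funext => s; rewrite raddf_sum fct_sumE.
by rewrite raddf_sum; apply: is_derive_sum => k; case: (zd k).
Qed.

End ComplexCalculus.

Section MatrixCalculus.
Variable R : realType.
Local Notation C := R[i].
Local Notation Re := (@complex.Re R).

Section Rectangular.
Variables m p : nat.
Implicit Types (X Y : 'M[C]_(m, p)) (P : 'I_m -> 'I_p -> bool).

Definition is_derivemx (X : R -> 'M[C]_(m, p)) t X' :=
  forall i j, is_derivec (fun s => X s i j) t (X' i j).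

Definition mxmask P X : 'M[C]_(m, p) := \matrix_(i, j) if P i j then X i j else 0.

Definition mxdot X Y : C := \sum_i \sum_j (X i j)^* * Y i j.

Definition frob2 X : R := \sum_i \sum_j sqnormc (X i j).

Lemma is_derivemxD (X Y : R -> 'M[C]_(m, p)) t X' Y' :
  is_derivemx X t X' -> is_derivemx Y t Y' -> is_derivemx (fun s => X s + Y s) t (X' + Y').
Proof. by move=> Xd Yd i j; under eq_fun do rewrite mxE; rewrite mxE; apply: is_derivecD. Qed.

Lemma is_derivemxN (X : R -> 'M[C]_(m, p)) t X' :
  is_derivemx X t X' -> is_derivemx (fun s => - X s) t (- X').
Proof. by move=> Xd i j; under eq_fun do rewrite mxE; rewrite mxE; apply: is_derivecN. Qed.

Lemma is_derivemxB (X Y : R -> 'M[C]_(m, p)) t X' Y' :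
  is_derivemx X t X' -> is_derivemx Y t Y' -> is_derivemx (fun s => X s - Y s) t (X' - Y').
Proof. by move=> Xd Yd; apply/is_derivemxD/is_derivemxN. Qed.

Lemma is_derivemx_mask P (X : R -> 'M[C]_(m, p)) t X' :
  is_derivemx X t X' -> is_derivemx (fun s => mxmask P (X s)) t (mxmask P X').
Proof.
move=> Xd i j; under eq_fun do rewrite mxE; rewrite mxE.
by case: (P i j) => //; apply: is_derivec_cst.
Qed.

Lemma is_derivec_mxdot (X Y : R -> 'M[C]_(m, p)) t X' Y' :
  is_derivemx X t X' -> is_derivemx Y t Y' ->
  is_derivec (fun s => mxdot (X s) (Y s)) t (mxdot X' (Y t) + mxdot (X t) Y').
Proof.
move=> Xd Yd; rewrite /mxdot -big_split /=; apply: is_derivec_sum => i.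
rewrite -big_split /=; apply: is_derivec_sum => j.
exact: is_derivecM (is_derivecJ (Xd i j)) (Yd i j).
Qed.

Lemma Re_mxdotC X Y : Re (mxdot X Y) = Re (mxdot Y X).
Proof.
rewrite /mxdot !raddf_sum; apply: eq_bigr => i _; rewrite !raddf_sum.
by apply: eq_bigr => j _; rewrite /= !ReM !ReJ !ImJ; ring.
Qed.

Lemma Re_mxdot_self X : Re (mxdot X X) = frob2 X.
Proof.
rewrite /mxdot raddf_sum; apply: eq_bigr => i _; rewrite raddf_sum.
by apply: eq_bigr => j _; rewrite /= Re_mulJ.
Qed.

Lemma Re_mxdot_le X Y :
  `|Re (mxdot X Y)| <= \sum_i \sum_j l1normc (X i j) * l1normc (Y i j).
Proof.
rewrite /mxdot raddf_sum; apply: le_trans (ler_norm_sum _ _ _) _.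
apply: ler_sum => i _; rewrite raddf_sum; apply: le_trans (ler_norm_sum _ _ _) _.
by apply: ler_sum => j _; exact: Re_mulJ_le.
Qed.

Lemma is_derive_frob2 (X : R -> 'M[C]_(m, p)) t X' : is_derivemx X t X' ->
  is_derive t 1 (fun s => frob2 (X s)) (2 * Re (mxdot (X t) X')).
Proof.
move=> Xd; under eq_fun do rewrite -Re_mxdot_self.
apply: is_derive_eq; first exact: (is_derivec_mxdot Xd Xd).1.
by rewrite raddfD /= Re_mxdotC mulr2n mulrDl mul1r.
Qed.

Lemma sqnormc_le_frob2 X i j : sqnormc (X i j) <= frob2 X.
Proof.
rewrite /frob2 (bigD1 i) //= (bigD1 j) //= -addrA lerDl.
by rewrite addr_ge0 ?sumr_ge0 // => *; rewrite ?sumr_ge0 // => *; apply: sqnormc_ge0.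
Qed.

Lemma frob2_ge0 X : 0 <= frob2 X.
Proof. by rewrite sumr_ge0 // => i _; rewrite sumr_ge0 // => j _; apply: sqnormc_ge0. Qed.

Lemma frob2_eq0 X : frob2 X = 0 -> X = 0.
Proof.
move=> X0; apply/matrixP => i j; rewrite mxE; apply: sqnormc_eq0.
by apply/eqP; rewrite eq_le sqnormc_ge0 andbT -X0 sqnormc_le_frob2.
Qed.

Lemma frob2_0 : frob2 0 = 0.
Proof.
rewrite /frob2 big1 // => i _; rewrite big1 // => j _.
by rewrite mxE /sqnormc raddf0 expr0n /= addr0.
Qed.

Lemma frob2_mask P X : frob2 (mxmask P X) <= frob2 X.
Proof. by apply: ler_sum => i _; apply: ler_sum => j _; rewrite mxE sqnormc_if. Qed.

Lemma l1normc_le_frob2 X i j : l1normc (X i j) <= 1 + 2 * frob2 X.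
Proof.
apply: le_trans (l1normc_le_sqnormc _) _.
by rewrite lerD2l ler_pM2l // sqnormc_le_frob2.
Qed.

End Rectangular.

Section Square.
Variable m : nat.
Implicit Types (X Z : 'M[C]_m).

Lemma sum_amgm (x : 'I_m -> 'I_m -> R) : (forall i j, 0 <= x i j) ->
  \sum_i \sum_j x i j * \sum_k (x i k + x k j) <= 2 * m%:R * \sum_i \sum_j x i j ^+ 2.
Proof.
move=> x0; set S := \sum_i \sum_j x i j ^+ 2.
have sum_const (a : R) : \sum_(k < m) a = m%:R * a by rewrite sumr_const card_ord mulr_natl.
(* x_ij (x_ik + x_kj) <= x_ij^2 + x_ik^2 / 2 + x_kj^2 / 2, and each of the three
   resulting triple sums equals m S *)
apply: (@le_trans _ _ (\sum_i \sum_j \sum_(k < m)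
    (x i j ^+ 2 + x i k ^+ 2 / 2 + x k j ^+ 2 / 2))).
  apply: ler_sum => i _; apply: ler_sum => j _; rewrite mulr_sumr.
  apply: ler_sum => k _; have := x0 i j; have := x0 i k; have := x0 k j.
  have := sqr_ge0 (x i j - x i k); have := sqr_ge0 (x i j - x k j); nra.
have e1 : \sum_(i < m) \sum_(j < m) \sum_(k < m) x i j ^+ 2 = m%:R * S.
  rewrite /S mulr_sumr; apply: eq_bigr => i _; rewrite mulr_sumr.
  by apply: eq_bigr => j _; rewrite sum_const.
have e2 : \sum_(i < m) \sum_(j < m) \sum_(k < m) x i k ^+ 2 = m%:R * S.
  by rewrite /S mulr_sumr; apply: eq_bigr => i _; rewrite sum_const.
have e3 : \sum_(i < m) \sum_(j < m) \sum_(k < m) x k j ^+ 2 = m%:R * S.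
  by rewrite /S -sum_const; apply: eq_bigr => i _; rewrite exchange_big.
have -> : \sum_i \sum_j \sum_(k < m) (x i j ^+ 2 + x i k ^+ 2 / 2 + x k j ^+ 2 / 2) =
    \sum_(i < m) \sum_(j < m) \sum_(k < m) x i j ^+ 2 +
    (\sum_(i < m) \sum_(j < m) \sum_(k < m) x i k ^+ 2) / 2 +
    (\sum_(i < m) \sum_(j < m) \sum_(k < m) x k j ^+ 2) / 2.
  rewrite !mulr_suml -!big_split; apply: eq_bigr => i _.
  rewrite !mulr_suml -!big_split; apply: eq_bigr => j _.
  by rewrite !mulr_suml -!big_split.
rewrite e1 e2 e3; lra.
Qed.

Lemma Re_mxdot_bound X Z (c : R) : 0 <= c ->
  (forall i j, l1normc (Z i j) <= c * \sum_k (l1normc (X i k) + l1normc (X k j))) ->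
  `|Re (mxdot X Z)| <= 4 * c * m%:R * frob2 X.
Proof.
move=> c0 Zc; set x := fun i j => l1normc (X i j).
have x0 i j : 0 <= x i j by apply: l1normc_ge0.
have xS : \sum_i \sum_j x i j ^+ 2 <= 2 * frob2 X.
  rewrite /frob2 mulr_sumr; apply: ler_sum => i _.
  by rewrite mulr_sumr; apply: ler_sum => j _; apply: l1normc_sqr_le.
apply: le_trans (Re_mxdot_le X Z) _.
apply: (@le_trans _ _ (c * \sum_i \sum_j x i j * \sum_k (x i k + x k j))).
  rewrite mulr_sumr; apply: ler_sum => i _; rewrite mulr_sumr; apply: ler_sum => j _.
  by rewrite mulrCA; apply: ler_wpM2l; [exact: x0 | exact: Zc].
apply: le_trans (ler_wpM2l c0 (sum_amgm x0)) _.
have m0 : 0 <= m%:R :> R by [].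
have := ler_wpM2l (mulr_ge0 c0 (mulr_ge0 (ler0n _ 2) m0)) xS; nra.
Qed.

Lemma mxdot_eq0_propagates (X Z : R -> 'M[C]_m) :
  (forall s, is_derivemx X s (Z s)) ->
  (forall a b, a <= b -> exists2 c, 0 <= c & forall s, a <= s -> s <= b ->
    forall i j, l1normc (Z s i j) <= c * \sum_k (l1normc (X s i k) + l1normc (X s k j))) ->
  forall s t, X s = 0 -> X t = 0.
Proof.
move=> Xd Zc s t Xs0; apply: frob2_eq0.
move: Xs0 => /(congr1 (fun Y : 'M[C]_m => frob2 Y)); rewrite frob2_0.
apply: (derive_eq0_propagates (fun s => is_derive_frob2 (Xd s))) => a b ab.
have [c c0 Zcs] := Zc a b ab; exists (8 * c * m%:R) => x ax xb.
have := Re_mxdot_bound c0 (Zcs x ax xb).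
by rewrite normrM ger0_norm //; lra.
Qed.

End Square.

End MatrixCalculus.

Ltac case_sdim :=
  repeat match goal with
         | |- context [(?a == ?b :> nat)] => case: (a =P b) => ?
         | |- context [(?a <= ?b)%N] => case: (leqP a b) => ?
         end; try (exfalso; lia).

Section DiracAlgebra.
Variables (R : realType) (n : nat) (e : rel 'I_n) (beta : R).
Local Notation C := R[i].
Local Notation N := (nsimp e).
Local Notation M := 'M[C]_N.
Local Notation Re := (@complex.Re R).
Local Notation ib := (Complex 0 beta : C).
Local Notation B := (Bop beta).
Implicit Types (X Y : M).

Definition lax X : M := B X *m X - X *m B X.

(* the flow keeps D(t) supported in this band, as D_0 is *)
Definition band (a b : 'I_N) : bool := (sdim a <= (sdim b).+1)%N && (sdim b <= (sdim a).+1)%N.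

Definition bandpart X := mxmask band X.

Definition offbandpart X := mxmask (fun a b => ~~ band a b) X.

Definition degtrace X : C := \sum_i (sdim i)%:R * X i i.

Lemma conj_ib : ib^* = - ib.
Proof. by apply/eqP; rewrite eq_complex /= oppr0 !eqxx. Qed.

Lemma adjmx_entry X a b : adjmx X a b = (X b a)^*.
Proof. by rewrite !mxE. Qed.

Lemma skew_entry X a b : (X - adjmx X) a b = X a b - (X b a)^*.
Proof. by rewrite !mxE. Qed.

Lemma hermitian_entry X : adjmx X = X -> forall a b, X b a = (X a b)^*.
Proof. by move=> XH a b; rewrite -{1}XH adjmx_entry. Qed.

Lemma is_derivemx_adj (X : R -> M) t X' :
  is_derivemx X t X' -> is_derivemx (fun s => adjmx (X s)) t (adjmx X').
Proof.
by move=> Xd i j; under eq_fun do rewrite adjmx_entry; rewrite adjmx_entry; apply: is_derivecJ.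
Qed.

Lemma mxdot_trace X Y : adjmx X = X -> mxdot X Y = \tr (X *m Y).
Proof.
move=> XH; rewrite /mxdot /mxtrace exchange_big; apply: eq_bigr => j _.
by rewrite mxE; apply: eq_bigr => i _; rewrite (hermitian_entry XH i j).
Qed.

Lemma trace_mul_commutator X Y : \tr (X *m (Y *m X - X *m Y)) = 0.
Proof. by rewrite mulmxBr mulmxA mxtraceD raddfN /= mxtrace_mulC subrr. Qed.

Lemma Bop_entry X a b : B X a b =
  (if sdim a == (sdim b).+1 then X a b else 0) - (if sdim b == (sdim a).+1 then X b a else 0)^*
  + ib * (if sdim a == sdim b then X a b else 0).
Proof. by rewrite !mxE. Qed.

Lemma Bop_addJ X a b :
  B X a b + (B X b a)^* = ib * (if sdim a == sdim b then X a b - (X b a)^* else 0).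
Proof.
rewrite !Bop_entry (eq_sym (sdim b) (sdim a)).
case: (sdim a == sdim b); case: (sdim a == (sdim b).+1); case: (sdim b == (sdim a).+1);
by rewrite !(conjCD, conjCN, conjCM, conjCK, conjC0, conj_ib); ring.
Qed.

Lemma l1normc_Bop X k : (forall i j, l1normc (X i j) <= k) ->
  forall a b, l1normc (B X a b) <= (2 + `|beta|) * k.
Proof.
move=> Xk a b; rewrite Bop_entry.
apply: le_trans (l1normcD _ _) _; rewrite l1normc_iM.
have := le_trans (l1normc_if (sdim a == (sdim b).+1) (X a b)) (Xk a b).
have := le_trans (l1normc_if (sdim b == (sdim a).+1) (X b a)) (Xk b a).
have := ler_wpM2l (normr_ge0 beta) (le_trans (l1normc_if (sdim a == sdim b) (X a b)) (Xk a b)).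
have := l1normcB (if sdim a == (sdim b).+1 then X a b else 0)
   ((if sdim b == (sdim a).+1 then X b a else 0)^*).
by rewrite l1normcJ; lra.
Qed.

Lemma lax_skew_entry X i j : (lax X - adjmx (lax X)) i j =
  \sum_k ((B X i k + (B X k i)^*) * (X j k)^* - (X k i)^* * (B X k j + (B X j k)^*)
     + B X i k * (X k j - (X j k)^*) - (X i k - (X k i)^*) * B X k j).
Proof.
rewrite !mxE !conjCB !conjC_sum -!sumrB; apply: eq_bigr => k _.
by rewrite !mxE !conjCM; ring.
Qed.

Lemma lax_skew_bound X k : 0 <= k -> (forall i j, l1normc (X i j) <= k) ->
  forall i j, l1normc ((lax X - adjmx (lax X)) i j) <=
  ((`|beta| + (2 + `|beta|)) * k) *
     \sum_l (l1normc ((X - adjmx X) i l) + l1normc ((X - adjmx X) l j)).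
Proof.
move=> k0 Xk i j; rewrite lax_skew_entry.
apply: le_trans (l1normc_sum _ _ _) _; rewrite mulr_sumr; apply: ler_sum => l _.
rewrite !skew_entry.
set xil := l1normc (X i l - (X l i)^*); set xlj := l1normc (X l j - (X j l)^*).
have XJk a b : l1normc (X a b)^* <= k by rewrite l1normcJ.
have BJ a b : l1normc (B X a b + (B X b a)^*) <= `|beta| * l1normc (X a b - (X b a)^*).
  by rewrite Bop_addJ l1normc_iM ler_wpM2l ?normr_ge0 ?l1normc_if.
have Bk := l1normc_Bop Xk.
have t1 := l1normcM_le (BJ i l) (XJk j l).
have t2 := l1normcM_le (XJk l i) (BJ l j).
have t3 := l1normcM_le (Bk i l) (lexx xlj).
have t4 := l1normcM_le (lexx xil) (Bk l j).
rewrite -/xil -/xlj in t1 t2.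
apply: le_trans (l1normcB _ _) _; have := l1normcD
  ((B X i l + (B X l i)^*) * (X j l)^* - (X l i)^* * (B X l j + (B X j l)^*))
  (B X i l * (X l j - (X j l)^*)).
have := l1normcB ((B X i l + (B X l i)^*) * (X j l)^*) ((X l i)^* * (B X l j + (B X j l)^*)).
have -> : (`|beta| + (2 + `|beta|)) * k * (xil + xlj) = `|beta| * xil * k +
  k * (`|beta| * xlj) + (2 + `|beta|) * k * xlj + xil * ((2 + `|beta|) * k) by ring.
lra.
Qed.

Lemma bandpart_add_offbandpart X a b : X a b = bandpart X a b + offbandpart X a b.
Proof. by rewrite !mxE; case: band; rewrite ?addr0 ?add0r. Qed.

Lemma offbandpart_eq0_entry X :
  offbandpart X = 0 -> forall a b, X a b = if band a b then X a b else 0.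
Proof. by move=> /matrixP X0 a b; have := X0 a b; rewrite !mxE; case: band => //= ->. Qed.

Lemma lax_far_cancel X : adjmx X = X -> forall i j k, ~~ band i j ->
  B X i k * bandpart X k j - bandpart X i k * B X k j = 0.
Proof.
move=> XH i j k; rewrite !Bop_entry !mxE (hermitian_entry XH i k) (hermitian_entry XH k j) /band.
by case_sdim => //= _; rewrite ?(conjCD, conjCN, conjCM, conjCK, conjC0); ring.
Qed.

Lemma offbandpart_lax_bound X k : adjmx X = X -> (forall i j, l1normc (X i j) <= k) ->
  forall i j, l1normc (offbandpart (lax X) i j) <=
    ((2 + `|beta|) * k) *
      \sum_l (l1normc (offbandpart X i l) + l1normc (offbandpart X l j)).
Proof.
move=> XH Xk i j; have k0 : 0 <= k by apply: le_trans (Xk i j); apply: l1normc_ge0.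
have c0 : 0 <= (2 + `|beta|) * k by rewrite mulr_ge0 // addr_ge0.
rewrite [offbandpart _ i j]mxE; case: ifP => [far|]; last first.
  by rewrite l1normc0 mulr_ge0 // sumr_ge0 // => l _; rewrite addr_ge0 ?l1normc_ge0.
rewrite !mxE -sumrB; apply: le_trans (l1normc_sum _ _ _) _.
rewrite mulr_sumr; apply: ler_sum => l _.
(* the part of X within the band contributes nothing far from the diagonal *)
have -> : B X i l * X l j - X i l * B X l j =
   (B X i l * bandpart X l j - bandpart X i l * B X l j) +
   (B X i l * offbandpart X l j - offbandpart X i l * B X l j).
  by rewrite {1}(bandpart_add_offbandpart X l j) {1}(bandpart_add_offbandpart X i l); ring.
rewrite lax_far_cancel ?far // add0r; apply: le_trans (l1normcB _ _) _.
have Bk := l1normc_Bop Xk.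
have := l1normcM_le (Bk i l) (lexx (l1normc (offbandpart X l j))).
have := l1normcM_le (lexx (l1normc (offbandpart X i l))) (Bk l j).
lra.
Qed.

Lemma dpart_lax X : adjmx X = X -> offbandpart X = 0 ->
  dpart (lax X) = (1 - ib) *: (dpart X *m bpart X - bpart X *m dpart X).
Proof.
move=> XH X0; apply/matrixP => i j; rewrite !mxE -!sumrB mulr_sumr.
case: (sdim i =P (sdim j).+1) => ij.
  apply: eq_bigr => k _; rewrite !mxE (hermitian_entry XH i k) (hermitian_entry XH k j).
  rewrite (offbandpart_eq0_entry X0 i k) (offbandpart_eq0_entry X0 k j) /band.
  by case_sdim => //=; rewrite ?(conjCD, conjCN, conjCM, conjCK, conjC0); ring.
symmetry; apply: big1 => k _.
rewrite !mxE (offbandpart_eq0_entry X0 i k) (offbandpart_eq0_entry X0 k j) /band.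
by case_sdim => //=; rewrite ?(conjCD, conjCN, conjCM, conjCK, conjC0); ring.
Qed.

Lemma dpart_lax_bound X k : adjmx X = X -> offbandpart X = 0 ->
  (forall i j, l1normc (X i j) <= k) ->
  forall i j, l1normc (dpart (lax X) i j) <=
     ((1 + `|beta|) * k) * \sum_l (l1normc (dpart X i l) + l1normc (dpart X l j)).
Proof.
move=> XH X0 Xk i j.
have bk a c : l1normc (bpart X a c) <= k.
  by rewrite mxE; apply: le_trans (l1normc_if _ _) (Xk a c).
rewrite dpart_lax //; move: (dpart X) (bpart X) bk => d b bk.
rewrite !mxE -sumrB; apply: le_trans (l1normcM _ _) _.
have -> : l1normc (1 - ib) = 1 + `|beta|.
  by rewrite /l1normc !raddfB /= subr0 sub0r normrN normr1.
rewrite -mulrA ler_wpM2l ?addr_ge0 //.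
apply: le_trans (l1normc_sum _ _ _) _; rewrite mulr_sumr; apply: ler_sum => l _.
apply: le_trans (l1normcB _ _) _.
have := l1normcM_le (lexx (l1normc (d i l))) (bk l j).
have := l1normcM_le (bk i l) (lexx (l1normc (d l j))).
lra.
Qed.

Lemma Re_degtrace_lax X : adjmx X = X ->
  Re (degtrace (lax X)) = 2 * frob2 (dpart X).
Proof.
move=> XH.
have -> : degtrace (lax X) =
    \sum_i \sum_k ((sdim i)%:R - (sdim k)%:R) * (B X i k * X k i).
  have -> : \sum_i \sum_k ((sdim i)%:R - (sdim k)%:R) * (B X i k * X k i) =
     \sum_i \sum_k (sdim i)%:R * (B X i k * X k i)
       - \sum_i \sum_k (sdim k)%:R * (B X i k * X k i).
    rewrite -sumrB; apply: eq_bigr => i _.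
    by rewrite -sumrB; apply: eq_bigr => k _; rewrite mulrBl.
  have -> : \sum_i \sum_k (sdim k)%:R * (B X i k * X k i) =
     \sum_i \sum_k (sdim i)%:R * (X i k * B X k i).
    rewrite exchange_big; apply: eq_bigr => i _; apply: eq_bigr => k _.
    by rewrite [X i k * _]mulrC.
  rewrite /degtrace -sumrB; apply: eq_bigr => i _.
  by rewrite !mxE mulrBr !mulr_sumr -sumrB; apply: eq_bigr => k _; rewrite !mxE.
have -> : 2 * frob2 (dpart X) = Re (\sum_i \sum_k
    ((dpart X i k)^* * dpart X i k + (dpart X k i)^* * dpart X k i)).
  rewrite -Re_mxdot_self mulr2n mulrDl mul1r -raddfD; congr Re.
  rewrite /mxdot [X in _ + X = _]exchange_big -big_split; apply: eq_bigr => i _.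
  by rewrite -big_split.
congr Re; apply: eq_bigr => i _; apply: eq_bigr => k _.
rewrite Bop_entry !mxE (hermitian_entry XH i k).
case_sdim => //=;
  repeat match goal with H : sdim _ = _ |- _ => rewrite H; clear H end;
  rewrite ?mulrS ?(conjCD, conjCN, conjCM, conjCK, conjC0); ring.
Qed.

Lemma Mop_bound X i j : l1normc (Mop X i j) <= 8 * N%:R * frob2 (dpart X).
Proof.
set d := dpart X; set A := d + adjmx d.
have A2 a b : l1normc (A a b) ^+ 2 <= 8 * frob2 d.
  rewrite mxE adjmx_entry; set u := d a b; set v := d b a.
  have := sqnormc_le_frob2 d a b; have := sqnormc_le_frob2 d b a.
  have := l1normc_sqr_le u; have := l1normc_sqr_le v; rewrite -/u -/v.
  have uv : l1normc (u + v^*) ^+ 2 <= (l1normc u + l1normc v) ^+ 2.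
    rewrite ler_sqr ?nnegrE ?addr_ge0 ?l1normc_ge0 //.
    by have := l1normcD u v^*; rewrite l1normcJ.
  have := sqr_ge0 (l1normc u - l1normc v); lra.
rewrite mxE; apply: le_trans (l1normc_sum _ _ _) _.
have -> : 8 * N%:R * frob2 d = \sum_(k < N) 8 * frob2 d.
  by rewrite sumr_const card_ord -mulr_natl; ring.
apply: ler_sum => k _; apply: le_trans (l1normcM _ _) _.
have := A2 i k; have := A2 k j.
have := l1normc_ge0 (A i k); have := l1normc_ge0 (A k j).
have := sqr_ge0 (l1normc (A i k) - l1normc (A k j)); nra.
Qed.

Lemma Mop_eq0 X : Mop X = 0 -> dpart X = 0.
Proof.
set A := dpart X + adjmx (dpart X) => M0.
have AH : adjmx A = A.
  by apply/matrixP => a b; rewrite !mxE conjCD conjCK addrC.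
have /frob2_eq0 A0 : frob2 A = 0.
  by rewrite -Re_mxdot_self mxdot_trace // -/(Mop X) M0 mxtrace0.
apply/matrixP => a b; have /matrixP/(_ a b) := A0.
rewrite !mxE; case: ifP => // ab; case: ifP => [|_]; last by rewrite conjC0 addr0.
by move=> /eqP ba; move: ab => /eqP; rewrite ba; lia.
Qed.

End DiracAlgebra.

Section InitialOperator.
Variables (R : realType) (n : nat) (e : rel 'I_n).
Local Notation C := R[i].
Local Notation N := (nsimp e).

Lemma simp_card_gt0 (i : 'I_N) : (0 < #|simp i|)%N.
Proof. by rewrite /simp; case: (enum_val i) => A /= /andP[]. Qed.

Lemma d0_neq0_sdim (i j : 'I_N) : d0 R e i j != 0 -> sdim i = (sdim j).+1.
Proof.
rewrite mxE; case: ifP => [/andP[_ /eqP ij] _|]; last by rewrite eqxx.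
by rewrite /sdim ij /= prednK // simp_card_gt0.
Qed.

Lemma D0_entry (i j : 'I_N) : D0 R e i j = d0 R e i j + (d0 R e j i)^*.
Proof. by rewrite /D0 !mxE. Qed.

Lemma adjmx_D0 : adjmx (D0 R e) = D0 R e.
Proof. by apply/matrixP => i j; rewrite adjmx_entry !D0_entry conjCD conjCK addrC. Qed.

Lemma offbandpart_D0 : offbandpart (D0 R e) = 0.
Proof.
apply/matrixP => i j; rewrite mxE [in RHS]mxE /band; case: ifP => // far.
have d0_far (a b : 'I_N) : ~~ ((sdim a <= (sdim b).+1) && (sdim b <= (sdim a).+1))%N ->
    d0 R e a b = 0.
  by move=> ab; apply/eqP; apply: contraNT ab => /d0_neq0_sdim ->; lia.
by rewrite D0_entry !d0_far ?conjC0 ?addr0 // andbC.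
Qed.

(* an edge {x, y} gives the nonzero entry d0 ({x, y}, {x}) = ±1 *)
Lemma dpart_D0_neq0 : simple_graph e -> has_edge e -> dpart (D0 R e) != 0.
Proof.
move=> [esym eirr] [x [y exy]].
have xy : x != y by apply: contraTneq exy => ->; exact: eirr.
have edge_simplex : is_simplex e [set x; y]%SET.
  rewrite /is_simplex cards2 xy; apply/forallP => u; apply/implyP => /set2P u_xy.
  apply/forallP => v; apply/implyP => /set2P v_xy; apply/implyP.
  by case: u_xy v_xy => -> [] -> //; rewrite ?eqxx // esym.
have vertex_simplex : is_simplex e [set x]%SET.
  rewrite /is_simplex cards1; apply/forallP => u; apply/implyP => /set1P ->.
  by apply/forallP => v; apply/implyP => /set1P ->; rewrite eqxx.
pose i := enum_rank (exist (fun A => is_simplex e A) _ edge_simplex).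
pose j := enum_rank (exist (fun A => is_simplex e A) _ vertex_simplex).
have si : simp i = [set x; y]%SET by rewrite /simp enum_rankK.
have sj : simp j = [set x]%SET by rewrite /simp enum_rankK.
have dij : sdim i = 1%N by rewrite /sdim si cards2 xy.
have dji : sdim j = 0%N by rewrite /sdim sj cards1.
apply/eqP => /matrixP/(_ i j); rewrite !mxE dij dji /= => d0ij.
move: d0ij; rewrite si sj cards2 xy cards1 /= andbT andbF conjC0 addr0.
have -> : [set x]%SET \subset [set x; y]%SET by rewrite finset.sub1set finset.set21.
have -> : ([set x; y] :\: [set x])%SET = [set y]%SET.
  apply/setP => u; rewrite !inE; have [->|uy] := eqVneq u y; first by rewrite orbT andbT eq_sym xy.
  by rewrite orbF andNb.
by rewrite big_set1 => /eqP; rewrite expf_eq0 oppr_eq0 oner_eq0 andbF.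
Qed.

End InitialOperator.

Section DiracDeformation.
Variables (R : realType) (n : nat) (e : rel 'I_n) (beta : R).
Variable D : R -> 'M[R[i]]_(nsimp e).
Hypothesis HD : dirac_deformation beta D.
Local Notation N := (nsimp e).
Local Notation Re := (@complex.Re R).

Lemma dirac_derive t : is_derivemx D t (lax beta (D t)).
Proof. exact: HD.2 t. Qed.

Lemma dirac_hermitian t : adjmx (D t) = D t.
Proof.
have skew_derive s : is_derivemx (fun s => D s - adjmx (D s)) s
    (lax beta (D s) - adjmx (lax beta (D s))).
  exact: is_derivemxB (dirac_derive s) (is_derivemx_adj (dirac_derive s)).
suff /eqP : D t - adjmx (D t) = 0 by rewrite subr_eq0 => /eqP.
have skew0 : D 0 - adjmx (D 0) = 0 by rewrite HD.1 adjmx_D0 subrr.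
apply: (mxdot_eq0_propagates skew_derive) skew0 => a b ab.
(* on a compact interval the flow stays bounded, so the skew part satisfies
   a linear differential inequality *)
have [k k0 Dk] := derivable_bounded_on ab (fun s => is_derive_frob2 (dirac_derive s)).
exists ((`|beta| + (2 + `|beta|)) * (1 + 2 * k)).
  by have := normr_ge0 beta; nra.
move=> s sa sb; apply: lax_skew_bound => [|i j]; first lra.
apply: le_trans (l1normc_le_frob2 _ i j) _.
by have := Dk s sa sb; rewrite ger0_norm ?frob2_ge0 //; lra.
Qed.

Lemma dirac_frob2 t : frob2 (D t) = frob2 (D 0).
Proof.
apply: (is_derive_0_is_cst (f := fun s => frob2 (D s))) => s.
apply: is_derive_eq (is_derive_frob2 (dirac_derive s)) _.
by rewrite mxdot_trace ?dirac_hermitian // trace_mul_commutator raddf0 mulr0.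
Qed.

Lemma dirac_entry_bound t i j : l1normc (D t i j) <= 1 + 2 * frob2 (D 0).
Proof. by rewrite -(dirac_frob2 t); apply: l1normc_le_frob2. Qed.

Lemma dirac_entry_bound_ge0 : 0 <= 1 + 2 * frob2 (D 0).
Proof. by have := frob2_ge0 (D 0); lra. Qed.

Lemma dirac_offbandpart t : offbandpart (D t) = 0.
Proof.
have offband_derive s :
    is_derivemx (fun s => offbandpart (D s)) s (offbandpart (lax beta (D s))).
  exact: is_derivemx_mask (dirac_derive s).
have offband0 : offbandpart (D 0) = 0 by rewrite HD.1 offbandpart_D0.
apply: (mxdot_eq0_propagates offband_derive) offband0 => a b _.
exists ((2 + `|beta|) * (1 + 2 * frob2 (D 0))).
  by have := normr_ge0 beta; have := dirac_entry_bound_ge0; nra.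
move=> s _ _; apply: offbandpart_lax_bound; [exact: dirac_hermitian | exact: dirac_entry_bound].
Qed.

Lemma dpart_lax_dirac_bound s i j :
  l1normc (dpart (lax beta (D s)) i j) <= ((1 + `|beta|) * (1 + 2 * frob2 (D 0))) *
    \sum_l (l1normc (dpart (D s) i l) + l1normc (dpart (D s) l j)).
Proof.
apply: dpart_lax_bound;
  [exact: dirac_hermitian | exact: dirac_offbandpart | exact: dirac_entry_bound].
Qed.

Lemma dirac_dpart_neq0 : simple_graph e -> has_edge e -> forall t, dpart (D t) != 0.
Proof.
move=> Hs He t; apply: contra (dpart_D0_neq0 R Hs He) => /eqP Dt0; rewrite -HD.1; apply/eqP.
have dpart_derive s : is_derivemx (fun s => dpart (D s)) s (dpart (lax beta (D s))).
  exact: is_derivemx_mask (dirac_derive s).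
apply: (mxdot_eq0_propagates dpart_derive) Dt0 => a b _.
exists ((1 + `|beta|) * (1 + 2 * frob2 (D 0))).
  by have := normr_ge0 beta; have := dirac_entry_bound_ge0; nra.
by move=> s _ _; apply: dpart_lax_dirac_bound.
Qed.

(* Barbalat for f = Re (degtrace D), whose derivative is 2 |d|^2 *)
Lemma dirac_dpart_cvg0 :
  2 * frob2 (dpart (D t)) @[t --> +oo] --> (0 : R) /\
  2 * frob2 (dpart (D t)) @[t --> -oo] --> (0 : R).
Proof.
pose K := 1 + 2 * frob2 (D 0).
have c0 : 0 <= (1 + `|beta|) * K.
  by have := normr_ge0 beta; have := dirac_entry_bound_ge0; rewrite /K; nra.
pose f s := Re (degtrace (D s)).
pose dg s := 2 * (2 * Re (mxdot (dpart (D s)) (dpart (lax beta (D s))))).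
have fd (s : R) : is_derive s 1 f (2 * frob2 (dpart (D s))).
  rewrite -(Re_degtrace_lax beta) ?dirac_hermitian //.
  apply: (is_derivec_sum (fun i => is_derivecMl _ (dirac_derive s i i))).1.
have gd (s : R) : is_derive s 1 (fun x => 2 * frob2 (dpart (D x))) (dg s).
  exact: is_deriveZ (is_derive_frob2 (is_derivemx_mask _ (dirac_derive s))).
have g0 (s : R) : 0 <= 2 * frob2 (dpart (D s)) by rewrite mulr_ge0 ?frob2_ge0.
have fb (s : R) : `|f s| <= \sum_(i < N) (sdim i)%:R * K.
  apply: le_trans (Re_le_l1normc _) _; apply: le_trans (l1normc_sum _ _ _) _.
  apply: ler_sum => i _; apply: le_trans (l1normcM _ _) _; rewrite l1normc_natr.
  by rewrite ler_wpM2l ?dirac_entry_bound.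
have dgb (s : R) : `|dg s| <= 2 * (2 * (4 * ((1 + `|beta|) * K) * N%:R * frob2 (D 0))).
  rewrite !normrM !normr_nat !ler_pM2l //.
  apply: le_trans (Re_mxdot_bound c0 (dpart_lax_dirac_bound s)) _.
  apply: ler_wpM2l; first exact: mulr_ge0 (mulr_ge0 (ler0n _ 4) c0) (ler0n _ _).
  by rewrite -(dirac_frob2 s); apply: frob2_mask.
split; [exact: barbalat_pinfty fd gd g0 fb dgb | exact: barbalat_ninfty fd gd g0 fb dgb].
Qed.

End DiracDeformation.

Theorem mainTheorem12 (R : realType) (n : nat) (e : rel 'I_n)
  (Hsimple : simple_graph e) (Hedge : has_edge e) (beta : R)
  (D : R -> 'M[R[i]]_(nsimp e)) (HD : dirac_deformation beta D) :
  (forall i j : 'I_(nsimp e),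
     complex.Re (Mop (D t) i j) @[t --> +oo] --> (0 : R) /\
     complex.Im (Mop (D t) i j) @[t --> +oo] --> (0 : R) /\
     complex.Re (Mop (D t) i j) @[t --> -oo] --> (0 : R) /\
     complex.Im (Mop (D t) i j) @[t --> -oo] --> (0 : R)) /\
  (forall t : R, Mop (D t) != 0).
Proof.
split=> [i j|t]; last first.
  by apply: contra (dirac_dpart_neq0 HD Hsimple Hedge t) => /eqP /Mop_eq0 ->.
have [pinfty ninfty] := dirac_dpart_cvg0 HD.
have Mop_dominated (h : R -> R) : (forall t, `|h t| <= l1normc (Mop (D t) i j)) ->
    forall t, `|h t| <= 4 * (nsimp e)%:R * (2 * frob2 (dpart (D t))).
  move=> hM t; apply: le_trans (hM t) _.
  have -> : 4 * (nsimp e)%:R * (2 * frob2 (dpart (D t))) =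
    8 * (nsimp e)%:R * frob2 (dpart (D t)) by ring.
  exact: Mop_bound.
have Re_dom := Mop_dominated _ (fun t => Re_le_l1normc _).
have Im_dom := Mop_dominated _ (fun t => Im_le_l1normc _).
split; first exact: cvg0_dominated Re_dom pinfty.
split; first exact: cvg0_dominated Im_dom pinfty.
split; first exact: cvg0_dominated Re_dom ninfty.
exact: cvg0_dominated Im_dom ninfty.
Qed.
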